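(* Let $I_1,I_2,I_3\ge2$ and $R\ge1$. If the real $R$-term CPD of $I_1\times I_2\times I_3$ tensors is generically unique, then the $R$-term additive polynomial model $(\mu_R,\Theta_1^R)$ with $\Theta_1=\mathbb{R}^{I_1+I_2+I_3-2}$ and base map $$\mu_1(\lambda,\underline{\mathbf{a}},\underline{\mathbf{b}},\underline{\mathbf{c}})=\mathrm{vec}\Big(\lambda\begin{bmatrix}\underline{\mathbf{a}}\\1\end{bmatrix}\circ\begin{bmatrix}\underline{\mathbf{b}}\\1\end{bmatrix}\circ\begin{bmatrix}\underline{\mathbf{c}}\\1\end{bmatrix}\Big),\qquad \lambda\in\mathbb{R},\ \underline{\mathbf{a}}\in\mathbb{R}^{I_1-1},\ \underline{\mathbf{b}}\in\mathbb{R}^{I_2-1},\ \underline{\mathbf{c}}\in\mathbb{R}^{I_3-1},$$ is identifiable.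
   Context: Generic uniqueness of the real $R$-term CPD: for all $(\boldsymbol\lambda,\mathbf{A},\mathbf{B},\mathbf{C})\in\mathbb{R}^R\times\mathbb{R}^{I_1\times R}\times\mathbb{R}^{I_2\times R}\times\mathbb{R}^{I_3\times R}$ outside a Lebesgue-null set, every other $R$-term decomposition of $\sum_r\lambda_r\mathbf{a}_r\circ\mathbf{b}_r\circ\mathbf{c}_r$ is obtained by permutation of terms and rescaling of the factors within each term. Additive model: given a base polynomial map $\mu_1:\Theta_1\to\mathbb{R}^S$, the $R$-term model is $\mu_R(\theta_1,\dots,\theta_R)=\mu_1(\theta_1)+\cdots+\mu_1(\theta_R)$ on $\Theta_1^R$. It is identifiable if for all $\theta\in\Theta_1^R$ outside a Lebesgue-null set, every $\theta'\in\Theta_1^R$ with $\mu_R(\theta')=\mu_R(\theta)$ is obtained from $\theta$ by permuting the blocks $\theta_r$ and replacing blocks by $\theta'_r$ with $\mu_1(\theta'_r)=\mu_1(\theta_r)$. *)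

From HB Require Import structures.
From mathcomp Require Import all_boot all_order all_algebra all_fingroup.
From mathcomp Require Import reals.
Set Implicit Arguments. Unset Strict Implicit. Unset Printing Implicit Defensive.
Import Order.TTheory GRing.Theory Num.Theory.
Local Open Scope ring_scope.

Section Defs.
Variable R : realType.

Definition lebesgue_null (X : finType) (S : (X -> R) -> Prop) : Prop :=
  forall eps : R, 0 < eps ->
  exists a b : nat -> X -> R,
    (forall n x, a n x <= b n x) /\
    (forall p, S p -> exists n, forall x, a n x <= p x <= b n x) /\
    (forall N : nat, \sum_(n < N) \prod_(x : X) (b n x - a n x) < eps).

Definition generically (X : finType) (P : (X -> R) -> Prop) : Prop :=
  exists N : (X -> R) -> Prop, lebesgue_null N /\ (forall p, ~ N p -> P p).

(* Coordinates of (lambda, A, B, C) in R^Rk x R^{I1 x Rk} x R^{I2 x Rk} x R^{I3 x Rk}. *)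
Definition cpd_coord (I1 I2 I3 Rk : nat) : finType :=
  ((('I_Rk + ('I_Rk * 'I_I1)) + ('I_Rk * 'I_I2)) + ('I_Rk * 'I_I3))%type.

Definition cpd_tensor (I1 I2 I3 Rk : nat) (lam : 'I_Rk -> R)
  (A : 'I_Rk -> 'I_I1 -> R) (B : 'I_Rk -> 'I_I2 -> R) (C : 'I_Rk -> 'I_I3 -> R)
  (i : 'I_I1) (j : 'I_I2) (k : 'I_I3) : R :=
  \sum_(r < Rk) lam r * A r i * B r j * C r k.

Definition cpd_perm_scale (I1 I2 I3 Rk : nat)
  (lam : 'I_Rk -> R) (A : 'I_Rk -> 'I_I1 -> R) (B : 'I_Rk -> 'I_I2 -> R) (C : 'I_Rk -> 'I_I3 -> R)
  (lam' : 'I_Rk -> R) (A' : 'I_Rk -> 'I_I1 -> R) (B' : 'I_Rk -> 'I_I2 -> R) (C' : 'I_Rk -> 'I_I3 -> R)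
  : Prop :=
  exists s : 'S_Rk, forall r : 'I_Rk,
    exists d al be ga : R,
      [/\ d != 0, al != 0, be != 0, ga != 0 & d * al * be * ga = 1] /\
      [/\ lam' (s r) = d * lam r,
          (forall i, A' (s r) i = al * A r i),
          (forall j, B' (s r) j = be * B r j) &
          (forall k, C' (s r) k = ga * C r k)].

Definition cpd_generically_unique (I1 I2 I3 Rk : nat) : Prop :=
  generically (X := cpd_coord I1 I2 I3 Rk) (fun th =>
    let lam := fun r => th (inl (inl (inl r))) in
    let A := fun r i => th (inl (inl (inr (r, i)))) in
    let B := fun r j => th (inl (inr (r, j))) in
    let C := fun r k => th (inr (r, k)) in
    forall (lam' : 'I_Rk -> R) (A' : 'I_Rk -> 'I_I1 -> R)
           (B' : 'I_Rk -> 'I_I2 -> R) (C' : 'I_Rk -> 'I_I3 -> R),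
      (forall i j k, cpd_tensor lam' A' B' C' i j k = cpd_tensor lam A B C i j k) ->
      cpd_perm_scale lam A B C lam' A' B' C').

Definition block (X1 : finType) (Rk : nat) (th : 'I_Rk * X1 -> R) (r : 'I_Rk)
  : X1 -> R := fun x => th (r, x).

Definition muR (X1 : finType) (V : zmodType) (mu1 : (X1 -> R) -> V) (Rk : nat)
  (th : 'I_Rk * X1 -> R) : V := \sum_(r < Rk) mu1 (block th r).

(* Theta_1^Rk has coordinates 'I_Rk * X1 (block r = theta_r). *)
Definition additive_identifiable (X1 : finType) (V : zmodType)
  (mu1 : (X1 -> R) -> V) (Rk : nat) : Prop :=
  generically (X := ('I_Rk * X1)%type) (fun th =>
    forall th' : 'I_Rk * X1 -> R, muR mu1 th' = muR mu1 th ->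
      exists s : 'S_Rk, forall r : 'I_Rk,
        mu1 (block th' (s r)) = mu1 (block th r)).

(* Theta_1 = R^(1 + (I1-1) + (I2-1) + (I3-1)) = R^(I1+I2+I3-2), coordinates
   (lambda, a_, b_, c_). *)
Definition theta1_coord (I1 I2 I3 : nat) : finType :=
  (((unit + 'I_I1.-1) + 'I_I2.-1) + 'I_I3.-1)%type.

(* [v; 1] : append a final coordinate equal to 1. *)
Definition ext1 (n : nat) (v : 'I_n.-1 -> R) (i : 'I_n) : R :=
  match (insub (val i) : option 'I_n.-1) with Some j => v j | None => 1 end.

(* vec : the entries of an I1 x I2 x I3 tensor listed along a fixed
   enumeration of the index triples. *)
Definition vec3 (I1 I2 I3 : nat) (T : 'I_I1 -> 'I_I2 -> 'I_I3 -> R)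
  : 'rV[R]_(#|{: 'I_I1 * 'I_I2 * 'I_I3}|) :=
  \row_k (let: (i, j, l) := enum_val k in T i j l).

Definition mu1_cpd (I1 I2 I3 : nat) (th : theta1_coord I1 I2 I3 -> R)
  : 'rV[R]_(#|{: 'I_I1 * 'I_I2 * 'I_I3}|) :=
  let lam := th (inl (inl (inl tt))) in
  let a := ext1 (n := I1) (fun i => th (inl (inl (inr i)))) in
  let b := ext1 (n := I2) (fun j => th (inl (inr j))) in
  let c := ext1 (n := I3) (fun k => th (inr k)) in
  vec3 (fun i j k => lam * a i * b j * c k).

End Defs.

(* If theta is a non-identifiable parameter of the additive model, then the
   CPD obtained by appending a last coordinate 1 to each of its factor vectors
   is non-unique.  Non-uniqueness of a CPD is invariant under
   multiplying one factor vector of a term by t and its weight by t^-1, and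
   such a rescaling moves the appended coordinate from 1 to t.  So for every
   bad normalized point, the null set of non-unique CPDs contains a whole
   segment t in [1, 2] in each appended direction.  A one-dimensional Fubini
   argument removes these directions one at a time: among countably many boxes
   of small total volume some level t in [1, 2] meets boxes whose remaining
   faces have small total volume.  What remains is the bad set of the additive
   model, which is therefore Lebesgue-null. *)

From HB Require Import structures.
From mathcomp Require Import all_boot all_order all_algebra all_fingroup.
From mathcomp Require Import reals.
From mathcomp Require Import all_classical all_reals all_analysis measurable_realfun.
From mathcomp Require Import ring lra zify.
Set Implicit Arguments. Unset Strict Implicit. Unset Printing Implicit Defensive.
Import Order.TTheory GRing.Theory Num.Theory.
Local Open Scope ring_scope.

Section SparselyCoveredPoint.
Local Open Scope classical_set_scope.
Variable R : realType.

Lemma integral_itv_indic_le (D : set R) (w a b : R) :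
  measurable D -> 0 <= w -> a <= b ->
  (\int[lebesgue_measure]_(t in D) (w * \1_`[a, b] t)%:E <= (w * (b - a))%:E)%E.
Proof.
move=> mD w0 ab.
rewrite (@integralZl_indic _ _ _ lebesgue_measure D mD (fun=> `[a, b]%classic) w) //;
  last by rewrite ltNge w0.
rewrite integral_indic // EFinM lee_wpmul2l ?lee_fin //.
apply: le_trans (measureIl _ _ _) _ => //; have := lebesgue_measure_itv `[a, b]%R.
rewrite /= lte_fin => ->.
by case: ltP => [_|ba]; rewrite ?EFinB // lee_fin subr_ge0.
Qed.

Lemma integral_indic_series_le (D : set R) (w a b : nat -> R) (dl : R) :
  measurable D -> (forall n, 0 <= w n) -> (forall n, a n <= b n) ->
  (forall N, \sum_(n < N) w n * (b n - a n) < dl) ->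
  (\int[lebesgue_measure]_(t in D) \sum_(n <oo) (w n * \1_`[a n, b n] t)%:E
     <= dl%:E)%E.
Proof.
move=> mD w0 ab small.
rewrite integral_nneseries //; first last.
- by move=> n t _; rewrite lee_fin mulr_ge0.
- by move=> n; apply/measurable_EFinP/measurable_funM.
apply: lime_le.
  apply: is_cvg_nneseries => n _ _.
  by apply: integral_ge0 => t _; rewrite lee_fin mulr_ge0.
near=> N; apply: (@le_trans _ _ (\sum_(0 <= n < N) (w n * (b n - a n))%:E)%E).
  by apply: lee_sum => n _; exact: integral_itv_indic_le.
by rewrite sumEFin lee_fin big_mkord ltW.
Unshelve. all: by end_near.
Qed.

Lemma exists_sparsely_covered_point (w a b : nat -> R) (dl : R) :
  (forall n, 0 <= w n) -> (forall n, a n <= b n) ->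
  (forall N, \sum_(n < N) w n * (b n - a n) < dl) ->
  exists2 t, 1 <= t <= 2 &
    forall N, \sum_(n < N | a n <= t <= b n) w n <= 2 * dl.
Proof.
move=> w0 ab small; have dl0 : 0 < dl by have := small 0%N; rewrite big_ord0.
apply: contrapT => /forall2NP dense.
pose D := `[(1 : R), 2]; have mD : measurable D by exact: measurable_itv.
pose f n t := (w n * \1_`[a n, b n] t)%:E.
have f0 n t : (0 <= f n t)%E by rewrite lee_fin mulr_ge0.
have mf n : measurable_fun D (fun t : R => f n t).
  by apply/measurable_EFinP/measurable_funM.
have int_le := integral_indic_series_le mD w0 ab small.
have int_ge : ((2 * dl)%:E <= \int[lebesgue_measure]_(t in D) \sum_(n <oo) f n t)%E.
  have -> : (2 * dl)%:E = (\int[lebesgue_measure]_(t in D) (cst (2 * dl)%:E) t)%E.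
    rewrite integral_cst //; have := lebesgue_measure_itv `[1 : R, 2]%R.
    by rewrite /= lte_fin ltr1n => ->; rewrite -EFinB -EFinM; congr EFin; lra.
  apply: ge0_le_integral => //.
  - by move=> t _; rewrite lee_fin mulr_ge0 // ltW.
  - by apply: (@ge0_emeasurable_sum _ _ _ D f xpredT) => // n t _ _; exact: f0.
  move=> t Dt; have t12 : 1 <= t <= 2 by move: Dt; rewrite /D /= in_itv.
  case: (dense t) => [/(_ t12) []|/existsNP [N /negP]].
  rewrite -ltNge => /ltW covered.
  rewrite /cst; apply: le_trans
    (@nneseries_lim_ge R (fun n => f n t) xpredT 0%N N (fun n _ _ => f0 n t)).
  rewrite big_mkord sumEFin lee_fin (le_trans covered) // big_mkcond ler_sum // => n _.
  by rewrite /f indicE mem_setE in_itv /=; case: ifP; rewrite ?mulr1 ?mulr0.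
by have := le_trans int_ge int_le; rewrite lee_fin; lra.
Qed.

End SparselyCoveredPoint.

Section NullOn.
Variables (R : realType) (X : finType).

(* The boxes only constrain the coordinates in K: the projection of S to R^K
   is Lebesgue-null. *)
Definition lebesgue_null_on (K : pred X) (S : (X -> R) -> Prop) : Prop :=
  forall eps : R, 0 < eps ->
  exists a b : nat -> X -> R,
    (forall n x, a n x <= b n x) /\
    (forall p, S p -> exists n, forall x, K x -> a n x <= p x <= b n x) /\
    (forall N : nat, \sum_(n < N) \prod_(x | K x) (b n x - a n x) < eps).

Lemma lebesgue_null_onT (S : (X -> R) -> Prop) :
  lebesgue_null S -> lebesgue_null_on predT S.
Proof.
move=> nullS eps eps0; have [a [b [ab [cover vol]]]] := nullS eps eps0.
exists a, b; split=> //; split=> // p /cover[n box].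
by exists n => x _; exact: box.
Qed.

Lemma lebesgue_null_on_sub (K K' : pred X) (S S' : (X -> R) -> Prop) :
  K =1 K' -> (forall p, S' p -> S p) ->
  lebesgue_null_on K S -> lebesgue_null_on K' S'.
Proof.
move=> eqK subS nullS eps eps0; have [a [b [ab [cover vol]]]] := nullS eps eps0.
exists a, b; split=> //; split.
  by move=> p /subS/cover[n box]; exists n => x; rewrite -eqK; exact: box.
by move=> N; under eq_bigr do under eq_bigl do rewrite -eqK; exact: vol.
Qed.

(* Fubini in the direction x0: pick a level t of the coordinate x0 met only by
   boxes whose K-faces have small total volume, and undo the rescaling c on
   those faces; x1 makes the K-volume of an empty box vanish. *)
Lemma lebesgue_null_on_slice (K : pred X) (x0 x1 : X) (c : X -> R -> R)
    (S E : (X -> R) -> Prop) :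
  ~~ K x0 -> K x1 ->
  (forall x t, 1 <= t <= 2 -> 2^-1 <= c x t <= 2) ->
  (forall p t, S p -> 1 <= t <= 2 ->
     exists2 q, E q & q x0 = t /\ forall x, K x -> q x = c x t * p x) ->
  lebesgue_null_on [predU1 x0 & K] E -> lebesgue_null_on K S.
Proof.
move=> Kx0 Kx1 c_bound slice nullE eps eps0.
pose M : R := \prod_(x | K x) 2; have M0 : 0 < M by apply: prodr_gt0 => x _; lra.
pose dl := eps / (4 * M); have dl0 : 0 < dl by rewrite divr_gt0 // mulr_gt0.
have [a [b [ab [cover vol]]]] := nullE dl dl0.
pose w n := \prod_(x | K x) (b n x - a n x).
have w0 n : 0 <= w n by apply: prodr_ge0 => x _; rewrite subr_ge0.
have vol_x0 N : \sum_(n < N) w n * (b n x0 - a n x0) < dl.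
  apply: le_lt_trans (vol N); apply: ler_sum => n _.
  rewrite (bigD1 x0) /= ?inE ?eqxx // mulrC le_eqVlt; apply/orP; left; apply/eqP.
  congr (_ * _); apply: eq_bigl => x /=.
  by case: (x =P x0) => [->|/eqP ne];
    rewrite ?eqxx ?(negbTE Kx0) ?(negbTE ne) ?andbT ?andbF.
have [t t12 light] := exists_sparsely_covered_point w0 (fun n => ab n x0) vol_x0.
pose hit n := a n x0 <= t <= b n x0.
have c0 x : 0 < c x t by have := c_bound x t t12; lra.
exists (fun n x => if hit n then a n x / c x t else 0).
exists (fun n x => if hit n then b n x / c x t else 0).
split; [|split].
- by move=> n x; case: ifP => // _; rewrite ler_pM2r ?invr_gt0.
- move=> p Sp; have [q Eq [qx0 qK]] := slice p t Sp t12.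
  have [n box] := cover q Eq; exists n => x Kx.
  have -> : hit n by rewrite /hit -qx0; apply: box; rewrite !inE eqxx.
  have /andP[lo hi] : a n x <= q x <= b n x by apply: box; apply/orP; right.
  rewrite qK // in lo hi.
  by rewrite ler_pdivrMr // ler_pdivlMr // -!(mulrC (c x t)) lo hi.
- move=> N; apply: (@le_lt_trans _ _ (M * (2 * dl))); last first.
    have -> : M * (2 * dl) = eps / 2 by rewrite /dl; field; exact: lt0r_neq0.
    lra.
  apply: le_trans (ler_wpM2l (ltW M0) (light N)).
  rewrite mulr_sumr [leRHS]big_mkcond /=.
  apply: ler_sum => n _; rewrite /hit; case: ifP => _; last first.
    by rewrite (bigD1 x1) //= subrr mul0r.
  rewrite /M /w -big_split /=; apply: ler_prod => x Kx; rewrite -mulrBl.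
  have /andP[c_lo _] := c_bound x t t12.
  apply/andP; split; first by rewrite divr_ge0 ?subr_ge0 ?ab ?ltW.
  by rewrite mulrC ler_wpM2r ?subr_ge0 ?ab // invf_ple ?posrE.
Qed.

Lemma lebesgue_null_pullback (Y : finType) (e : Y -> X)
    (S : (X -> R) -> Prop) :
  injective e -> lebesgue_null_on (mem (codom e)) S ->
  lebesgue_null (fun th : Y -> R => exists2 p, S p & forall y, p (e y) = th y).
Proof.
move=> inj_e nullS eps eps0; have [a [b [ab [cover vol]]]] := nullS eps eps0.
exists (fun n y => a n (e y)), (fun n y => b n (e y)); split=> //; split.
  move=> th [p /cover[n box] pe]; exists n => y.
  by rewrite -pe; apply: box; exact: codom_f.
move=> N; apply: le_lt_trans (vol N); apply: ler_sum => n _.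
by rewrite -big_uniq ?big_image // map_inj_uniq ?enum_uniq.
Qed.

End NullOn.

Section NormalizedSlice.
Variables (R : realType) (X : finType) (K : pred X) (x1 : X).
Variables (c : X -> R -> X -> R) (P : (X -> R) -> Prop).
Hypotheses (Kx1 : K x1)
  (c_self : forall x t, ~~ K x -> c x t x = t)
  (c_other : forall x y t, ~~ K x -> ~~ K y -> y != x -> c x t y = 1)
  (c_bound : forall x y t, 1 <= t <= 2 -> 2^-1 <= c x t y <= 2)
  (P_scale : forall x p t, ~~ K x -> 1 <= t <= 2 -> P p -> P (fun y => c x t y * p y)).

Let normalized_off (l : seq X) (p : X -> R) :=
  P p /\ forall x, ~~ K x -> x \notin l -> p x = 1.

Let lebesgue_null_on_normalized_off (l : seq X) :
  uniq l -> {subset l <= predC K} ->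
  lebesgue_null_on [pred y | K y || (y \in l)] (normalized_off l) ->
  lebesgue_null_on K (normalized_off [::]).
Proof.
elim: l => [|x l IH] /=.
  by move=> _ _; apply: lebesgue_null_on_sub => // y; rewrite /= orbF.
case/andP=> xl ul sub_xl nullE.
have Kx : ~~ K x by have := sub_xl x (mem_head x l).
apply: IH => // [y yl|]; first by apply: sub_xl; rewrite inE yl orbT.
apply: (@lebesgue_null_on_slice _ _ _ x x1 (fun y t => c x t y) _
  (normalized_off (x :: l))).
- by rewrite /= negb_or Kx.
- by rewrite /= Kx1.
- by move=> y t; exact: c_bound.
- move=> p t [Pp p1] t12; exists (fun y => c x t y * p y); last first.
    by rewrite c_self // p1 ?mulr1.
  split; first exact: P_scale.
  move=> y Ky; rewrite inE negb_or => /andP[yx yl].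
  by rewrite c_other // p1 ?mulr1.
- apply: lebesgue_null_on_sub nullE => // y.
  by rewrite /= !inE orbCA.
Qed.

Lemma lebesgue_null_on_normalized :
  lebesgue_null_on predT P ->
  lebesgue_null_on K (fun p => P p /\ forall x, ~~ K x -> p x = 1).
Proof.
move=> nullP.
apply: lebesgue_null_on_sub (lebesgue_null_on_normalized_off (enum_uniq (predC K)) _ _).
- by [].
- by move=> p [Pp p1]; split=> // x Kx _; exact: p1.
- by move=> x; rewrite mem_enum.
apply: lebesgue_null_on_sub nullP => [y|p [] //].
by rewrite /= mem_enum inE orbN.
Qed.

End NormalizedSlice.

Section PermScale.
Variables (R : realType) (I1 I2 I3 Rk : nat).
Variables (lam : 'I_Rk -> R) (A : 'I_Rk -> 'I_I1 -> R).
Variables (B : 'I_Rk -> 'I_I2 -> R) (C : 'I_Rk -> 'I_I3 -> R).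

Lemma cpd_tensor_rescale (f0 f1 f2 f3 : 'I_Rk -> R) i j k :
  (forall r, f0 r * f1 r * f2 r * f3 r = 1) ->
  cpd_tensor (fun r => f0 r * lam r) (fun r i => f1 r * A r i)
    (fun r j => f2 r * B r j) (fun r k => f3 r * C r k) i j k =
  cpd_tensor lam A B C i j k.
Proof.
move=> prod1; apply: eq_bigr => r _.
by rewrite -[RHS]mul1r -(prod1 r); ring.
Qed.

Variables (lam' : 'I_Rk -> R) (A' : 'I_Rk -> 'I_I1 -> R).
Variables (B' : 'I_Rk -> 'I_I2 -> R) (C' : 'I_Rk -> 'I_I3 -> R).

Lemma cpd_perm_scale_rescale (f0 f1 f2 f3 : 'I_Rk -> R) :
  (forall r, f0 r * f1 r * f2 r * f3 r = 1) ->
  cpd_perm_scale lam A B C lam' A' B' C' ->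
  cpd_perm_scale (fun r => f0 r * lam r) (fun r i => f1 r * A r i)
    (fun r j => f2 r * B r j) (fun r k => f3 r * C r k) lam' A' B' C'.
Proof.
move=> prod1 [s scale]; exists s => r.
have [d [al [be [ga [[d0 al0 be0 ga0 dabg1] [el eA eB eC]]]]]] := scale r.
have : f0 r * f1 r * f2 r * f3 r != 0 by rewrite prod1 oner_neq0.
rewrite !mulf_eq0 !negb_or => /andP[/andP[/andP[f00 f10] f20] f30].
exists (d / f0 r), (al / f1 r), (be / f2 r), (ga / f3 r).
split; first split; rewrite ?mulf_neq0 ?invr_eq0 //.
  transitivity ((d * al * be * ga) / (f0 r * f1 r * f2 r * f3 r)).
    by field; rewrite f00 f10 f20 f30.
  by rewrite dabg1 prod1 divr1.
by split=> [|i|j|k]; rewrite ?el ?eA ?eB ?eC; field.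
Qed.

Lemma cpd_perm_scale_terms :
  cpd_perm_scale lam A B C lam' A' B' C' ->
  exists s : 'S_Rk, forall r i j k,
    lam' (s r) * A' (s r) i * B' (s r) j * C' (s r) k =
    lam r * A r i * B r j * C r k.
Proof.
case=> s scale; exists s => r i j k.
have [d [al [be [ga [[_ _ _ _ dabg1] [-> -> -> ->]]]]]] := scale r.
by rewrite -[RHS]mul1r -dabg1; ring.
Qed.

End PermScale.

Section CPDCoordinates.
Variables (R : realType) (I1 I2 I3 Rk : nat).
Local Notation X := (cpd_coord I1 I2 I3 Rk).

Definition cpd_lam (z : X -> R) (r : 'I_Rk) : R := z (inl (inl (inl r))).
Definition cpd_A (z : X -> R) (r : 'I_Rk) (i : 'I_I1) : R := z (inl (inl (inr (r, i)))).
Definition cpd_B (z : X -> R) (r : 'I_Rk) (j : 'I_I2) : R := z (inl (inr (r, j))).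
Definition cpd_C (z : X -> R) (r : 'I_Rk) (k : 'I_I3) : R := z (inr (r, k)).

Definition cpd_unique_at (z : X -> R) : Prop :=
  forall lam' A' B' C',
    (forall i j k, cpd_tensor lam' A' B' C' i j k =
                   cpd_tensor (cpd_lam z) (cpd_A z) (cpd_B z) (cpd_C z) i j k) ->
    cpd_perm_scale (cpd_lam z) (cpd_A z) (cpd_B z) (cpd_C z) lam' A' B' C'.

Lemma cpd_generically_uniqueE :
  cpd_generically_unique R I1 I2 I3 Rk = generically cpd_unique_at.
Proof. by []. Qed.

Definition cpd_term (x : X) : 'I_Rk :=
  match x with
  | inl (inl (inl r)) | inl (inl (inr (r, _))) | inl (inr (r, _)) | inr (r, _) => r
  end.

Definition cpd_factor (x : X) : nat :=
  match x with
  | inl (inl (inl _)) => 0 | inl (inl (inr _)) => 1 | inl (inr _) => 2 | inr _ => 3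
  end.

Lemma cpd_unique_at_rescale (m : nat -> 'I_Rk -> R) (z : X -> R) :
  (forall r, m 0%N r * m 1%N r * m 2%N r * m 3%N r = 1) ->
  cpd_unique_at z -> cpd_unique_at (fun x => m (cpd_factor x) (cpd_term x) * z x).
Proof.
move=> prod1 uniq_z lam' A' B' C' eq_tensor.
apply: (cpd_perm_scale_rescale prod1 (uniq_z _ _ _ _ _)) => i j k.
rewrite eq_tensor.
exact: (cpd_tensor_rescale (cpd_lam z) (cpd_A z) (cpd_B z) (cpd_C z) i j k prod1).
Qed.

Lemma cpd_unique_at_rescaleE (m : nat -> 'I_Rk -> R) (z : X -> R) :
  (forall r, m 0%N r * m 1%N r * m 2%N r * m 3%N r = 1) ->
  cpd_unique_at (fun x => m (cpd_factor x) (cpd_term x) * z x) <-> cpd_unique_at z.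
Proof.
move=> prod1; split; last exact: cpd_unique_at_rescale.
have m0 k r : (k <= 3)%N -> m k r != 0.
  have : m 0%N r * m 1%N r * m 2%N r * m 3%N r != 0 by rewrite prod1 oner_neq0.
  rewrite !mulf_eq0 !negb_or => /andP[/andP[/andP[n0 n1] n2] n3].
  by case: k => [|[|[|[|]]]].
move=> /(@cpd_unique_at_rescale (fun k r => (m k r)^-1)).
have -> // : (fun x => (m (cpd_factor x) (cpd_term x))^-1 *
                        (m (cpd_factor x) (cpd_term x) * z x)) = z.
  apply/funext => x; rewrite mulrA mulVf ?mul1r // m0 //.
  by case: x => [[[]|]|].
by apply=> r; rewrite -!invfM prod1 invr1.
Qed.

Definition cpd_is_last (x : X) : bool :=
  match x with
  | inl (inl (inl _)) => false
  | inl (inl (inr (_, i))) => val i == I1.-1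
  | inl (inr (_, j)) => val j == I2.-1
  | inr (_, k) => val k == I3.-1
  end.

Lemma cpd_is_last_factor (x : X) : cpd_is_last x -> (0 < cpd_factor x)%N.
Proof. by case: x => [[[]|]|]. Qed.

Lemma cpd_is_last_inj (x y : X) : cpd_is_last x -> cpd_is_last y ->
  cpd_term x = cpd_term y -> cpd_factor x = cpd_factor y -> x = y.
Proof.
case: x => [[[r|[r i]]|[r j]]|[r k]]; case: y => [[[r'|[r' i']]|[r' j']]|[r' k']] //=.
all: by move=> /eqP ei /eqP ei' -> _; repeat f_equal; apply: ord_inj; rewrite ei ei'.
Qed.

(* Multiplies the factor vector containing x by t and the weight of the same
   term by t^-1, which leaves the rank-one term unchanged. *)
Definition factor_scaling (x : X) (t : R) (k : nat) (r : 'I_Rk) : R :=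
  if r != cpd_term x then 1
  else if k == 0%N then t^-1 else if k == cpd_factor x then t else 1.

Lemma factor_scaling_self (x : X) (t : R) : cpd_is_last x ->
  factor_scaling x t (cpd_factor x) (cpd_term x) = t.
Proof.
move=> /cpd_is_last_factor /lt0n_neq0 /negbTE fx0.
by rewrite /factor_scaling eqxx /= fx0 eqxx.
Qed.

Lemma factor_scaling_other (x y : X) (t : R) : cpd_is_last x -> cpd_is_last y ->
  y != x -> factor_scaling x t (cpd_factor y) (cpd_term y) = 1.
Proof.
move=> lx ly yx; rewrite /factor_scaling; case: eqVneq => //= eterm.
rewrite (negbTE (lt0n_neq0 (cpd_is_last_factor ly))).
by case: eqVneq => // efac; case/eqP: yx; exact: cpd_is_last_inj.
Qed.

Lemma factor_scaling_prod (x : X) (t : R) (r : 'I_Rk) : cpd_is_last x -> t != 0 ->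
  factor_scaling x t 0 r * factor_scaling x t 1 r *
  factor_scaling x t 2 r * factor_scaling x t 3 r = 1.
Proof.
rewrite /factor_scaling => /cpd_is_last_factor.
case: (r != cpd_term x); first by rewrite !mulr1.
by case: x => [[[]|]|] _ //= _ t0; rewrite ?mulr1 ?mul1r ?mulVf.
Qed.

Lemma factor_scaling_bound (x : X) (t : R) k r : 1 <= t <= 2 ->
  2^-1 <= factor_scaling x t k r <= 2.
Proof.
move=> /andP[t1 t2]; have t0 : 0 < t by lra.
have : 2^-1 <= t^-1 <= 1 by rewrite lef_pV2 ?posrE // invf_le1 // t2 t1.
by rewrite /factor_scaling; case: ifP => _; [|case: ifP => _; [|case: ifP => _]]; lra.
Qed.

Lemma cpd_nonunique_normalized_null : (0 < Rk)%N ->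
  generically cpd_unique_at ->
  lebesgue_null_on [pred x | ~~ cpd_is_last x]
    (fun z => ~ cpd_unique_at z /\ forall x, cpd_is_last x -> z x = 1).
Proof.
move=> Rk0 [N [nullN uniqN]].
pose scaling x t y := factor_scaling x t (cpd_factor y) (cpd_term y).
apply: lebesgue_null_on_sub
  (@lebesgue_null_on_normalized R X [pred x | ~~ cpd_is_last x]
     (inl (inl (inl (Ordinal Rk0)))) scaling (fun z => ~ cpd_unique_at z)
     _ _ _ _ _ _) => //.
- by move=> z [nu last1]; split=> // x /negPn; exact: last1.
- by move=> x t /negPn; exact: factor_scaling_self.
- by move=> x y t /negPn lx /negPn; exact: factor_scaling_other.
- by move=> x y t; exact: factor_scaling_bound.
- move=> x z t /negPn lx t12; apply: contra_not.
  have t0 : t != 0 by apply: lt0r_neq0; lra.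
  exact: (cpd_unique_at_rescaleE _ (fun r => factor_scaling_prod r lx t0)).1.
- apply: lebesgue_null_on_sub (lebesgue_null_onT nullN) => // z nu.
  by apply: contrapT => Nz; exact: nu (uniqN z Nz).
Qed.

End CPDCoordinates.

Section ThetaCoordinates.
Variables (R : realType) (I1 I2 I3 Rk : nat).
Local Notation X := (cpd_coord I1 I2 I3 Rk).
Local Notation Y := ('I_Rk * theta1_coord I1 I2 I3)%type.

Definition theta_coord (y : Y) : X :=
  let: (r, c) := y in
  match c with
  | inl (inl (inl _)) => inl (inl (inl r))
  | inl (inl (inr i)) => inl (inl (inr (r, widen_ord (leq_pred I1) i)))
  | inl (inr j) => inl (inr (r, widen_ord (leq_pred I2) j))
  | inr k => inr (r, widen_ord (leq_pred I3) k)
  end.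

Definition cpd_of_theta (th : Y -> R) (x : X) : R :=
  match x with
  | inl (inl (inl r)) => th (r, inl (inl (inl tt)))
  | inl (inl (inr (r, i))) => ext1 (fun i' => th (r, inl (inl (inr i')))) i
  | inl (inr (r, j)) => ext1 (fun j' => th (r, inl (inr j'))) j
  | inr (r, k) => ext1 (fun k' => th (r, inr k')) k
  end.

Lemma theta_coord_inj : injective theta_coord.
Proof.
move=> [r [[[[]|i]|j]|k]] [r' [[[[]|i']|j']|k']] //= [->] //.
all: by move=> /ord_inj ->.
Qed.

Lemma codom_theta_coord (x : X) : (x \in codom theta_coord) = ~~ cpd_is_last x.
Proof.
apply/codomP/idP => [[[r [[[[]|i]|j]|k]]] ->|]; rewrite /= ?neq_ltn ?ltn_ord //.
case: x => [[[r|[r i]]|[r j]]|[r k]] /= => [_|lt|lt|lt].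
- by exists (r, inl (inl (inl tt))).
- have hi : (i < I1.-1)%N by move: (ltn_ord i) lt; clear; lia.
  exists (r, inl (inl (inr (Ordinal hi)))).
  by congr (inl (inl (inr (_, _)))); exact: ord_inj.
- have hj : (j < I2.-1)%N by move: (ltn_ord j) lt; clear; lia.
  by exists (r, inl (inr (Ordinal hj))); congr (inl (inr (_, _))); exact: ord_inj.
- have hk : (k < I3.-1)%N by move: (ltn_ord k) lt; clear; lia.
  by exists (r, inr (Ordinal hk)); congr (inr (_, _)); exact: ord_inj.
Qed.

Lemma cpd_of_theta_coord (th : Y -> R) (y : Y) : cpd_of_theta th (theta_coord y) = th y.
Proof. by case: y => [r [[[[]|i]|j]|k]]; rewrite /= /ext1 /= ?valK. Qed.

Lemma cpd_of_theta_last (th : Y -> R) (x : X) : cpd_is_last x -> cpd_of_theta th x = 1.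
Proof.
case: x => [[[r|[r i]]|[r j]]|[r k]] //= /eqP last.
all: by rewrite /ext1 insubF //= last ltnn.
Qed.

Local Notation mu1 := (@mu1_cpd R I1 I2 I3).
Local Notation tensor_of th := (cpd_tensor (cpd_lam (cpd_of_theta th))
  (cpd_A (cpd_of_theta th)) (cpd_B (cpd_of_theta th)) (cpd_C (cpd_of_theta th))).

Lemma muR_cpd_of_theta (th : Y -> R) i j k :
  muR mu1 th 0 (enum_rank (i, j, k)) = tensor_of th i j k.
Proof.
by rewrite /muR summxE; apply: eq_bigr => r _; rewrite /mu1_cpd /vec3 mxE enum_rankK.
Qed.

Lemma cpd_unique_identifiable (th : Y -> R) :
  cpd_unique_at (cpd_of_theta th) ->
  forall th', muR mu1 th' = muR mu1 th ->
  exists s : 'S_Rk, forall r, mu1 (block th' (s r)) = mu1 (block th r).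
Proof.
move=> uniq_th th' eq_mu.
have eq_tensor i j k : tensor_of th' i j k = tensor_of th i j k.
  by rewrite -!muR_cpd_of_theta eq_mu.
have [s eq_terms] := cpd_perm_scale_terms (uniq_th _ _ _ _ eq_tensor).
exists s => r; apply/rowP => k; rewrite !mxE; case: (enum_val k) => [[i j] l].
exact: eq_terms.
Qed.

End ThetaCoordinates.

Theorem mainTheorem8 (R : realType) (I1 I2 I3 Rk : nat) :
  (2 <= I1)%N -> (2 <= I2)%N -> (2 <= I3)%N -> (1 <= Rk)%N ->
  cpd_generically_unique R I1 I2 I3 Rk ->
  additive_identifiable (@mu1_cpd R I1 I2 I3) Rk.
Proof.
move=> _ _ _ Rk0.
rewrite cpd_generically_uniqueE => /(cpd_nonunique_normalized_null Rk0) null.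
exists (fun th => exists2 z, ~ cpd_unique_at z /\ (forall x, cpd_is_last x -> z x = 1)
                          & forall y, z (theta_coord y) = th y).
split.
  apply: (lebesgue_null_pullback (@theta_coord_inj I1 I2 I3 Rk)).
  by apply: lebesgue_null_on_sub null => // x; rewrite /= codom_theta_coord.
move=> th not_bad; apply: cpd_unique_identifiable; apply: contrapT => nu.
apply: not_bad; exists (cpd_of_theta th); last exact: cpd_of_theta_coord.
by split=> // x; exact: cpd_of_theta_last.
Qed.
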